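(* Let $G$ be a finite simple undirected graph. Then there exists an integer $n\ge 2$ such that $G$ is isomorphic to an induced subgraph of $G(n)$.
   Context: For an integer $n\ge 2$, let $V(n)$ be the set of all divisors of $n$ that are greater than $1$. The graph $G(n)$ is the simple undirected graph with vertex set $V(n)$ in which two distinct vertices $a,b$ are adjacent if and only if $\gcd(a,b)>1$. *)

From mathcomp Require Import all_boot.
Set Implicit Arguments. Unset Strict Implicit. Unset Printing Implicit Defensive.

Definition divGraph_vertex (n a : nat) : bool := (1 < a) && (a %| n).

Definition divGraph_adj (a b : nat) : bool := (a != b) && (1 < gcdn a b).

Definition simple_graph (T : finType) (e : rel T) : Prop :=
  symmetric e /\ irreflexive e.

Definition induced_subgraph_of_divGraph (T : finType) (e : rel T) (n : nat) : Prop :=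
  exists f : T -> nat,
    [/\ injective f,
        forall x, divGraph_vertex n (f x)
      & forall x y, e x y = divGraph_adj (f x) (f y)].

(* Label every vertex subset of G by its own prime, and send a vertex v to the
   product of the primes of the cliques containing v.  A prime divides the
   images of two distinct vertices x and y exactly when it labels a clique
   containing both, which happens iff x and y are adjacent; the singleton
   clique {v} makes the map injective with values > 1.  All images divide the
   product of all the labels (> 1 even for the empty graph, thanks to the label
   of the empty set), which is the required n. *)

From mathcomp Require Import all_boot.

Set Implicit Arguments.
Unset Strict Implicit.
Unset Printing Implicit Defensive.

Fixpoint prime_seq (k : nat) : nat :=
  if k is k'.+1 then s2val (prime_above (prime_seq k')) else 2.

Lemma prime_seq_prime k : prime (prime_seq k).
Proof. by case: k => [|k] //=; case: prime_above. Qed.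

Lemma prime_seq_inj : injective prime_seq.
Proof.
apply/incn_inj/leq_mono; apply: homo_ltn => [y x z|k]; first exact: ltn_trans.
by rewrite /=; case: prime_above.
Qed.

Definition prime_label (I : finType) (i : I) : nat := prime_seq (enum_rank i).

Lemma prime_label_prime (I : finType) (i : I) : prime (prime_label i).
Proof. exact: prime_seq_prime. Qed.

Lemma prime_label_inj (I : finType) : injective (@prime_label I).
Proof. by move=> i j /prime_seq_inj/val_inj/enum_rank_inj. Qed.

Section PrimeLabelProducts.
Variables (I : finType) (P : pred I).

Lemma prime_dvd_prod_label q : prime q ->
  (q %| \prod_(i | P i) prime_label i) = [exists (i | P i), q == prime_label i].
Proof.
move=> q_pr; rewrite Euclid_dvd_prod // big_orE.
by apply: eq_existsb => i; rewrite dvdn_prime2 ?prime_label_prime.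
Qed.

Lemma prime_label_dvd_prod j : (prime_label j %| \prod_(i | P i) prime_label i) = P j.
Proof.
rewrite prime_dvd_prod_label ?prime_label_prime //.
apply/existsP/idP => [[i /andP[Pi /eqP/prime_label_inj ->]] // | Pj].
by exists j; rewrite Pj eqxx.
Qed.

Lemma prod_label_gt0 : 0 < \prod_(i | P i) prime_label i.
Proof. by rewrite prodn_gt0 // => i; rewrite prime_gt0 ?prime_label_prime. Qed.

Lemma prod_label_gt1 j : P j -> 1 < \prod_(i | P i) prime_label i.
Proof.
move=> Pj; apply: leq_trans (prime_gt1 (prime_label_prime j)) (dvdn_leq _ _).
  exact: prod_label_gt0.
by rewrite prime_label_dvd_prod.
Qed.

End PrimeLabelProducts.

Lemma gcdn_gt1P m n : 0 < m ->
  reflect (exists2 p, prime p & (p %| m) && (p %| n)) (1 < gcdn m n).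
Proof.
move=> m_gt0; apply: (iffP idP) => [gcd_gt1 | [p p_pr /andP[pm pn]]].
  exists (pdiv (gcdn m n)); first exact: pdiv_prime.
  by rewrite !(dvdn_trans (pdiv_dvd _)) ?dvdn_gcdl ?dvdn_gcdr.
apply: leq_trans (prime_gt1 p_pr) (dvdn_leq _ _); first by rewrite gcdn_gt0 m_gt0.
by rewrite dvdn_gcd pm pn.
Qed.

Definition clique (T : finType) (e : rel T) (A : {set T}) : bool :=
  [forall x in A, forall y in A, (x != y) ==> e x y].

Section CliqueEmbedding.
Variables (T : finType) (e : rel T).
Hypothesis e_sym : symmetric e.

Definition in_clique (v : T) (A : {set T}) : bool := (v \in A) && clique e A.

Definition clique_code (v : T) : nat :=
  \prod_(A : {set T} | in_clique v A) prime_label A.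

Lemma in_clique_set1 v : in_clique v [set v].
Proof.
rewrite /in_clique set11; apply/forallP => x; apply/implyP => /set1P ->.
by apply/forall_inP => y /set1P ->; rewrite eqxx.
Qed.

Lemma adjacent_in_clique x y : x != y ->
  e x y = [exists A, in_clique x A && (y \in A)].
Proof.
move=> neq_xy; apply/idP/existsP => [exy | [A /andP[/andP[xA clA] yA]]].
  exists [set x; y]; rewrite /in_clique !inE !eqxx orbT andbT.
  apply/forall_inP => u /set2P u_xy; apply/forall_inP => w /set2P w_xy.
  apply/implyP; case: u_xy w_xy => -> [] ->; rewrite ?eqxx // => _.
  by rewrite e_sym.
by have /forall_inP/(_ x xA)/forall_inP/(_ y yA)/implyP := clA; apply.
Qed.

Lemma clique_code_gt1 v : 1 < clique_code v.
Proof. exact: prod_label_gt1 (in_clique_set1 v). Qed.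

Lemma clique_code_inj : injective clique_code.
Proof.
move=> x y code_xy; have : prime_label [set x] %| clique_code y.
  by rewrite -code_xy prime_label_dvd_prod in_clique_set1.
by rewrite prime_label_dvd_prod /in_clique => /andP[/set1P ->].
Qed.

Lemma prime_dvd_clique_codes q x y : prime q ->
  (q %| clique_code x) && (q %| clique_code y) =
  [exists A, [&& in_clique x A, y \in A & q == prime_label A]].
Proof.
move=> q_pr; rewrite !prime_dvd_prod_label //; apply/andP/existsP.
  case=> /exists_inP[A xA /eqP qA] /exists_inP[B yB /eqP qB].
  have AB : A = B by apply: prime_label_inj; rewrite -qA -qB.
  by exists A; rewrite xA qA eqxx AB; case/andP: yB => ->.
case=> A /and3P[xA yA qA]; split; apply/exists_inP; exists A => //.
by rewrite /in_clique yA; case/andP: xA.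
Qed.

Lemma adjacent_clique_code x y : x != y ->
  e x y = (1 < gcdn (clique_code x) (clique_code y)).
Proof.
move=> neq_xy; rewrite adjacent_in_clique //.
apply/existsP/(gcdn_gt1P _ (ltnW (clique_code_gt1 x))).
  case=> A /andP[xA yA]; exists (prime_label A); first exact: prime_label_prime.
  rewrite prime_dvd_clique_codes ?prime_label_prime //.
  by apply/existsP; exists A; rewrite xA yA eqxx.
case=> q q_pr; rewrite prime_dvd_clique_codes // => /existsP[A /and3P[xA yA _]].
by exists A; rewrite xA yA.
Qed.

End CliqueEmbedding.

Theorem theorem1 (T : finType) (e : rel T) :
  simple_graph e -> exists n : nat, 1 < n /\ induced_subgraph_of_divGraph e n.
Proof.
case=> e_sym e_irr.
exists (\prod_(A : {set T}) prime_label A); split.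
  exact: (@prod_label_gt1 _ xpredT set0).
exists (clique_code e); split.
- exact: clique_code_inj.
- move=> v; rewrite /divGraph_vertex clique_code_gt1 /=.
  by rewrite (bigID (in_clique e v)) /= dvdn_mulr.
- move=> x y; rewrite /divGraph_adj; have [<-|neq_xy] := eqVneq x y.
    by rewrite e_irr eqxx.
  rewrite (inj_eq (@clique_code_inj _ _)) neq_xy.
  exact: adjacent_clique_code.
Qed.
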